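(* Fix a prime $p$ and $n\in\mathbb{N}$, and let $\Gamma_n=\frac1{p^n}\mathbb{Z}\times\frac1{p^n}\mathbb{Z}$. Define $\mathbb{L}^\Sigma_{p,n}:\Gamma_n\to[0,\infty)$ by $\mathbb{L}^\Sigma_{p,n}(\gamma_1,\gamma_2)=\mathbb{L}_{p,n}(\gamma_1)+\mathbb{L}_{p,n}(\gamma_2)$, where $\mathbb{L}_{p,n}$ is the restriction to $\frac1{p^n}\mathbb{Z}$ of $\mathbb{L}_p(r)=|r|+\|r\|_p$. Then $\mathbb{L}^\Sigma_{p,n}$ is a proper length function on $\Gamma_n$ that is of bounded doubling with constant $(4p^8)^4$.
   Context: $\|\cdot\|_p$ is the $p$-adic norm on $\mathbb{Q}$. A length function $\mathbb{L}$ on a discrete group satisfies $\mathbb{L}(\gamma)=0\iff\gamma=e$, $\mathbb{L}(\gamma^{-1})=\mathbb{L}(\gamma)$, $\mathbb{L}(\gamma\gamma')\le\mathbb{L}(\gamma)+\mathbb{L}(\gamma')$. With $B_{\mathbb{L}}(R)=\{\gamma:\mathbb{L}(\gamma)\le R\}$, $\mathbb{L}$ is proper if all $B_{\mathbb{L}}(R)$ are finite, and of bounded doubling with constant $C$ if it is proper and $|B_{\mathbb{L}}(2R)|\le C|B_{\mathbb{L}}(R)|$ for all $R\ge1$. *)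

From HB Require Import structures.
From mathcomp Require Import all_boot all_order all_algebra.
From mathcomp Require Import reals.
Set Implicit Arguments. Unset Strict Implicit. Unset Printing Implicit Defensive.
Import Order.TTheory GRing.Theory Num.Theory.
Local Open Scope ring_scope.

(* p-adic norm on Q: ||0||_p = 0, ||p^a u/v||_p = p^(-a) (u, v prime to p). *)
Definition padic_norm (p : nat) (r : rat) : rat :=
  if r == 0 then 0
  else (p%:R ^+ logn p `|denq r|%N) / (p%:R ^+ logn p `|numq r|%N).

Definition Lp (p : nat) (r : rat) : rat := `|r| + padic_norm p r.

(* Gamma_n = (1/p^n Z) x (1/p^n Z), realised via coordinates:
   (k1, k2) : int * int  represents  (k1 / p^n, k2 / p^n).
   This is an isomorphism of additive groups Z^2 -> Gamma_n. *)
Definition gamma_coord (p n : nat) (k : int) : rat := k%:~R / (p%:R ^+ n).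

Definition LSigma (R : realType) (p n : nat) (g : int * int) : R :=
  ratr (Lp p (gamma_coord p n g.1) + Lp p (gamma_coord p n g.2)).

Definition is_length_function (G : zmodType) (R : realType) (L : G -> R) : Prop :=
  (forall g, 0 <= L g) /\
  (forall g, L g = 0 <-> g = 0) /\
  (forall g, L (- g) = L g) /\
  (forall g h, L (g + h) <= L g + L h).

Definition enum_ball (G : zmodType) (R : realType) (L : G -> R) (r : R)
  (s : seq G) : Prop :=
  uniq s /\ forall g, g \in s <-> L g <= r.

Definition is_proper (G : zmodType) (R : realType) (L : G -> R) : Prop :=
  forall r : R, exists s : seq G, enum_ball L r s.

Definition bounded_doubling (G : zmodType) (R : realType) (L : G -> R) (C : R)
  : Prop :=
  is_proper L /\
  forall (r : R) (s1 s2 : seq G), 1 <= r ->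
    enum_ball L r s1 -> enum_ball L (2 * r) s2 ->
    (size s2)%:R <= C * (size s1)%:R.

From mathcomp Require Import all_boot all_order all_algebra.
From mathcomp Require Import reals boolp.
From mathcomp Require Import zify lra.
Set Implicit Arguments.
Unset Strict Implicit.
Unset Printing Implicit Defensive.

Import Order.TTheory GRing.Theory Num.Theory.
Local Open Scope ring_scope.

(* L^Sigma is the sum of two copies of L_{p,n}(k) = |k|/p^n + p^n/p^(v_p k),
   written on the coordinate k = p^n x.  This is a length function because the
   p-adic term is ultrametric, and it is proper because |k| <= p^n L_{p,n}(k).
   For doubling, fix a scale s and the least b with 2 p^n <= s p^b.  Every k
   with L_{p,n}(k) <= 4s is divisible by p^(b-3); rounding k towards zero to a
   multiple of 8 p^b and dividing by 8 gives a point of length at most s, and k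
   is recovered from it together with the residue of k / p^(b-3) modulo 16 p^3.
   Doing this in both coordinates embeds the ball of radius 2r into the ball of
   radius r times (16 p^3)^2 labels, and (16 p^3)^2 <= (4 p^8)^4. *)

Lemma uniq_size_le_mul (T U V : eqType) (h : T -> U * V)
    (s : seq T) (a : seq U) (b : seq V) :
  uniq s -> {in s &, injective h} ->
  (forall x, x \in s -> (h x).1 \in a /\ (h x).2 \in b) ->
  (size s <= size a * size b)%N.
Proof.
move=> s_uniq h_inj h_ab; rewrite -(size_allpairs pair) -(size_map h).
apply: uniq_leq_size; first by rewrite map_inj_in_uniq.
move=> _ /mapP[x xs ->]; have [ha hb] := h_ab x xs.
by apply/allpairsP; exists (h x); case: (h x) ha hb.
Qed.

Section SumLength.
Variable R : realType.

Lemma enum_ball_filter (G : zmodType) (L : G -> R) (r : R) (s : seq G) :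
  uniq s -> (forall g, L g <= r -> g \in s) ->
  enum_ball L r [seq g <- s | L g <= r].
Proof.
move=> s_uniq ball_s; split=> [|g]; first exact: filter_uniq.
by rewrite mem_filter; split=> [/andP[]//|le_gr]; rewrite le_gr ball_s.
Qed.

Definition compressible (T : Type) (L : T -> R) (s : R) (m : nat) : Prop :=
  exists (f : T -> T) (c : T -> nat),
    [/\ forall g, L g <= 4 * s -> L (f g) <= s,
        forall g, (c g < m)%N
      & {in [pred g | L g <= 4 * s] &, injective (fun g => (f g, c g))}].

Variables (G H : zmodType) (L1 : G -> R) (L2 : H -> R).
Hypotheses (L1_length : is_length_function L1) (L2_length : is_length_function L2).

Definition sum_length (g : G * H) : R := L1 g.1 + L2 g.2.

Let L1_ge0 g : 0 <= L1 g. Proof. exact: L1_length.1. Qed.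
Let L2_ge0 h : 0 <= L2 h. Proof. exact: L2_length.1. Qed.

Lemma sum_length_function : is_length_function sum_length.
Proof.
have [_ [L1_eq0 [L1N L1D]]] := L1_length.
have [_ [L2_eq0 [L2N L2D]]] := L2_length.
split; [|split; [|split]] => [g|[g h]|g|g g']; rewrite /sum_length /=.
- by rewrite addr_ge0.
- split=> [/eqP|[-> ->]]; last by rewrite (L1_eq0 0).2 // (L2_eq0 0).2 // addr0.
  by rewrite paddr_eq0 // => /andP[/eqP/L1_eq0 -> /eqP/L2_eq0 ->].
- by rewrite L1N L2N.
- by rewrite addrACA lerD.
Qed.

Lemma sum_length_proper :
  is_proper L1 -> is_proper L2 -> is_proper sum_length.
Proof.
move=> L1_proper L2_proper r.
have [s1 [s1_uniq s1_ball]] := L1_proper r.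
have [s2 [s2_uniq s2_ball]] := L2_proper r.
exists [seq g <- [seq (g, h) | g <- s1, h <- s2] | sum_length g <= r].
apply: enum_ball_filter => [|[g h] le_r].
  by rewrite allpairs_uniq // => -[? ?] [? ?] _ _ [-> ->].
apply/allpairsP; exists (g, h); split=> //; [apply/s1_ball | apply/s2_ball].
- by apply: le_trans le_r; rewrite lerDl.
- by apply: le_trans le_r; rewrite lerDr.
Qed.

Lemma sum_length_doubling (m1 m2 : nat) (r : R) (s1 s2 : seq (G * H)) :
  (forall s, 0 < s -> compressible L1 s m1) ->
  (forall s, 0 < s -> compressible L2 s m2) ->
  0 < r -> enum_ball sum_length r s1 -> enum_ball sum_length (2 * r) s2 ->
  (size s2 <= size s1 * (m1 * m2))%N.
Proof.
move=> L1_comp L2_comp r_gt0 [_ s1_ball] [s2_uniq s2_ball].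
have s_gt0 : 0 < r / 2 by rewrite divr_gt0.
have [f1 [c1 [f1_le c1_lt f1_inj]]] := L1_comp _ s_gt0.
have [f2 [c2 [f2_le c2_lt f2_inj]]] := L2_comp _ s_gt0.
have coord_le g : g \in s2 -> L1 g.1 <= 4 * (r / 2) /\ L2 g.2 <= 4 * (r / 2).
  move=> /s2_ball; rewrite /sum_length.
  by have := L1_ge0 g.1; have := L2_ge0 g.2; split; lra.
rewrite -[m1](size_iota 0) -[m2](size_iota 0) -(size_allpairs pair).
apply: (uniq_size_le_mul (h := fun g => ((f1 g.1, f2 g.2), (c1 g.1, c2 g.2)))).
- exact: s2_uniq.
- move=> [g h] [g' h'] /coord_le[/= g_le h_le] /coord_le[/= g'_le h'_le].
  move=> [f1_eq f2_eq c1_eq c2_eq].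
  rewrite (f1_inj g g') ?inE //; last by rewrite f1_eq c1_eq.
  by rewrite (f2_inj h h') ?inE // f2_eq c2_eq.
- move=> g /coord_le[g_le h_le]; split=> /=.
    apply/s1_ball; rewrite /sum_length /=.
    by have := f1_le _ g_le; have := f2_le _ h_le; lra.
  by apply/allpairsP; exists (c1 g.1, c2 g.2); rewrite !mem_iota /= c1_lt c2_lt.
Qed.

End SumLength.

Lemma pfactor_dvdz (p m : nat) (k : int) : prime p -> k != 0 ->
  ((p ^ m)%N%:Z %| k)%Z = (m <= logn p `|k|)%N.
Proof. by move=> p_prime k_neq0; rewrite dvdzE /= pfactor_dvdn // absz_gt0. Qed.

Lemma dvdz_small_eq0 (d : nat) (x : int) :
  (d%:Z %| x)%Z -> (`|x| < d)%N -> x = 0.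
Proof.
rewrite dvdzE /= => dvd_dx; apply: contraTeq => x_neq0; rewrite -leqNgt.
by apply: dvdn_leq; rewrite ?absz_gt0.
Qed.

(* Rounds towards zero; divz rounds down, which would not shrink negative k. *)
Definition tdivz (k : int) (d : nat) : int :=
  if k < 0 then - (`|k| %/ d)%N%:Z else (`|k| %/ d)%N%:Z.

Lemma absz_tdivz k d : (`|tdivz k d| = `|k| %/ d)%N.
Proof. by rewrite /tdivz; case: ifP; rewrite ?abszN. Qed.

Lemma tdivz_rem k d : (0 < d)%N -> (`|(k - d%:Z * tdivz k d)%R| < d)%N.
Proof.
move=> d_gt0; have := divn_eq `|k| d; have := ltn_pmod `|k| d_gt0.
by rewrite /tdivz; case: ifP; lia.
Qed.

Lemma padic_norm_gamma (p n : nat) (k : int) : prime p -> k != 0 ->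
  padic_norm p (gamma_coord p n k) = p%:R ^+ n / p%:R ^+ logn p `|k|.
Proof.
move=> p_prime k_neq0.
have p_gt0 : (0 < p)%N by apply: prime_gt0.
have pR_neq0 : (p%:R : rat) != 0 by rewrite pnatr_eq0 -lt0n.
set r := gamma_coord p n k.
have r_neq0 : r != 0.
  by rewrite /r /gamma_coord mulf_neq0 ?invr_eq0 ?expf_neq0 ?intr_eq0.
rewrite /padic_norm (negbTE r_neq0).
have num_den : numq r * (p ^ n)%N%:Z = k * denq r.
  apply/eqP; rewrite -(@eqr_int rat) !rmorphM /=.
  rewrite -eqr_div ?intr_eq0 ?denq_neq0 ?pnatr_eq0 ?expn_eq0 -?lt0n ?p_gt0 //.
    by rewrite divq_num_den /r /gamma_coord -pmulrn natrX.
  by rewrite expn_gt0 p_gt0.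
have := congr1 (logn p \o absz) num_den; rewrite /= !abszM.
rewrite lognM ?expn_gt0 ?p_gt0 ?absz_gt0 ?numq_eq0 //.
rewrite lognM ?absz_gt0 ?denq_neq0 // pfactorK // => logn_eq.
apply/eqP; rewrite eqr_div ?expf_neq0 // -!exprD; apply/eqP; congr (_ ^+ _).
lia.
Qed.

Section PadicCoordinate.
Variables (R : realType) (p n : nat).
Hypothesis p_prime : prime p.

Definition Lpn (k : int) : R :=
  if k == 0 then 0
  else `|k|%:~R / p%:R ^+ n + p%:R ^+ n / p%:R ^+ logn p `|k|.

Lemma ratr_Lp_gamma (k : int) : ratr (Lp p (gamma_coord p n k)) = Lpn k.
Proof.
rewrite /Lpn /Lp; have [->|k_neq0] := eqVneq k 0.
  by rewrite /gamma_coord /padic_norm mul0r normr0 eqxx addr0 rmorph0.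
rewrite padic_norm_gamma // rmorphD /= ratr_norm /gamma_coord !fmorph_div /=.
by rewrite ratr_int !rmorphXn /= ratr_nat normf_div intr_norm normrX ger0_norm.
Qed.

Let p_gt1 : 1 < (p%:R : R). Proof. by rewrite ltr1n prime_gt1. Qed.

Let pX_gt0 m : 0 < (p%:R : R) ^+ m.
Proof. by rewrite exprn_gt0 // ltr0n prime_gt0. Qed.

Let pX_div_le m v : (m <= v)%N ->
  (p%:R : R) ^+ n / p%:R ^+ v <= p%:R ^+ n / p%:R ^+ m.
Proof.
move=> le_mv; apply: ler_wpM2l; first exact/ltW/pX_gt0.
by rewrite lef_pV2 ?posrE ?pX_gt0 // ler_eXn2l.
Qed.

Let abs_term_ge0 (k : int) : 0 <= `|k|%:~R / p%:R ^+ n :> R.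
Proof. by rewrite divr_ge0 ?ler0z ?normr_ge0 ?ltW ?pX_gt0. Qed.

Let padic_term_gt0 v : 0 < p%:R ^+ n / p%:R ^+ v :> R.
Proof. by rewrite divr_gt0 ?pX_gt0. Qed.

Lemma Lpn_ge0 k : 0 <= Lpn k.
Proof.
rewrite /Lpn; case: eqP => // _.
by rewrite addr_ge0 ?abs_term_ge0 ?ltW ?padic_term_gt0.
Qed.

Lemma Lpn_gt0 k : k != 0 -> 0 < Lpn k.
Proof.
by move=> k_neq0; rewrite /Lpn (negbTE k_neq0) ltr_wpDl ?abs_term_ge0.
Qed.

Lemma LpnN k : Lpn (- k) = Lpn k.
Proof. by rewrite /Lpn oppr_eq0 normrN abszN. Qed.

Lemma Lpn_ge_abs k : `|k|%:~R / p%:R ^+ n <= Lpn k.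
Proof.
rewrite /Lpn; case: eqP => [->|_]; first by rewrite normr0 mul0r.
by rewrite lerDl ltW.
Qed.

Lemma Lpn_ge_padic k : k != 0 -> p%:R ^+ n / p%:R ^+ logn p `|k| <= Lpn k.
Proof. by move=> k_neq0; rewrite /Lpn (negbTE k_neq0) lerDr. Qed.

Lemma LpnD a b : Lpn (a + b) <= Lpn a + Lpn b.
Proof.
have [->|a_neq0] := eqVneq a 0; first by rewrite add0r /Lpn eqxx add0r.
have [->|b_neq0] := eqVneq b 0; first by rewrite addr0 /Lpn eqxx addr0.
have [->|ab_neq0] := eqVneq (a + b) 0.
  by rewrite /Lpn eqxx addr_ge0 ?Lpn_ge0.
rewrite /Lpn (negbTE a_neq0) (negbTE b_neq0) (negbTE ab_neq0) addrACA lerD //.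
  rewrite -mulrDl ler_pM2r ?invr_gt0 ?pX_gt0 // !intr_norm rmorphD /=.
  exact: ler_normD.
(* ultrametric: p^v divides a + b for the smaller valuation v *)
set v := minn (logn p `|a|) (logn p `|b|).
have le_v : (v <= logn p `|(a + b)%R|)%N.
  by rewrite -pfactor_dvdz // rpredD // pfactor_dvdz // ?geq_minl ?geq_minr.
apply: le_trans (pX_div_le le_v) _; rewrite /v; case: leqP => _.
  by rewrite lerDl ltW.
by rewrite lerDr ltW.
Qed.

Lemma Lpn_length : is_length_function Lpn.
Proof.
split; [exact: Lpn_ge0 | split; [|split; [exact: LpnN | exact: LpnD]]] => k.
split=> [|->]; last by rewrite /Lpn eqxx.
by apply: contra_eq => /Lpn_gt0/gt_eqF->.
Qed.

Definition int_range (M : nat) : seq int :=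
  [seq i%:Z - M%:Z | i <- iota 0 M.*2.+1].

Lemma int_range_uniq M : uniq (int_range M).
Proof. by rewrite map_inj_uniq ?iota_uniq // => i j /addIr []. Qed.

Lemma mem_int_range M k : (`|k| <= M)%N -> k \in int_range M.
Proof.
move=> le_kM; apply/mapP; exists `|(k + M%:Z)%R|%N; last by lia.
by rewrite mem_iota; lia.
Qed.

Lemma Lpn_proper : is_proper Lpn.
Proof.
move=> r; exists [seq k <- int_range (Num.truncn (r * p%:R ^+ n)) | Lpn k <= r].
apply: enum_ball_filter => [|k le_kr]; first exact: int_range_uniq.
have le_abs : (absz k)%:R <= r * p%:R ^+ n.
  rewrite -ler_pdivrMr ?pX_gt0 // natr_absz.
  exact: le_trans (Lpn_ge_abs k) le_kr.
by apply: mem_int_range; rewrite truncn_ge_nat // (le_trans _ le_abs).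
Qed.

Definition shrink (b : nat) (k : int) : int := (p ^ b)%N%:Z * tdivz k (8 * p ^ b).

Definition residue_label (b : nat) (k : int) : nat :=
  absz (modz (divz k (p ^ (b - 3))%N) (16 * p ^ 3)%N).

Lemma residue_label_lt b k : (residue_label b k < 16 * p ^ 3)%N.
Proof.
have M_gt0 : (0 < 16 * p ^ 3)%N by rewrite muln_gt0 expn_gt0 (prime_gt0 p_prime).
rewrite /residue_label -ltz_nat gez0_abs ?modz_ge0 ?ltz_pmod //.
by apply/eqP; lia.
Qed.

Lemma shrink_eq_near b k k' : shrink b k = shrink b k' ->
  (`|(k - k')%R| < 16 * p ^ b)%N.
Proof.
have pb_gt0 : (0 < p ^ b)%N by rewrite expn_gt0 (prime_gt0 p_prime).
have D_gt0 : (0 < 8 * p ^ b)%N by rewrite muln_gt0 pb_gt0.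
have pb_neq0 : (p ^ b)%N%:Z != 0 by apply/eqP; lia.
move=> /(mulfI pb_neq0) tdivz_eq.
have := tdivz_rem k D_gt0; have := tdivz_rem k' D_gt0.
by rewrite tdivz_eq; lia.
Qed.

Lemma residue_label_eq_dvdz b k k' :
  ((p ^ (b - 3))%N%:Z %| k)%Z -> ((p ^ (b - 3))%N%:Z %| k')%Z ->
  residue_label b k = residue_label b k' ->
  ((16 * p ^ 3 * p ^ (b - 3))%N%:Z %| k - k')%Z.
Proof.
set P := (p ^ (b - 3))%N; set M := (16 * p ^ 3)%N => dvd_k dvd_k' label_eq.
have M_neq0 : M%:Z != 0.
  by apply/eqP; have := expn_gt0 p 3; rewrite (prime_gt0 p_prime); lia.
have mod_eq : (divz k P == divz k' P %[mod M])%Z.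
  move: label_eq; rewrite /residue_label -!/P -!/M => /(congr1 Posz).
  by rewrite !gez0_abs ?modz_ge0 // => ->.
have dvd_div : (M%:Z %| divz k P - divz k' P)%Z by rewrite -eqz_mod_dvd.
have := dvdz_mul dvd_div (dvdzz P%:Z).
by rewrite mulrBl !divzK // PoszM.
Qed.

Section Compression.
Variables (s : R) (b : nat).
Hypotheses (s_gt0 : 0 < s) (scale_large : 2 * p%:R ^+ n <= s * p%:R ^+ b)
  (scale_min : forall b', 2 * p%:R ^+ n <= s * p%:R ^+ b' -> (b <= b')%N).

Lemma Lpn_shrink k : Lpn k <= 4 * s -> Lpn (shrink b k) <= s.
Proof.
move=> le_ks; have [->|sk_neq0] := eqVneq (shrink b k) 0.
  by rewrite /Lpn eqxx ltW.
have abs_le : 8 * (`|shrink b k|%:~R : R) <= `|k|%:~R.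
  rewrite -!natr_absz -natrM ler_nat /shrink abszM absz_tdivz /= mulnA mulnC.
  exact: leq_divM.
have logn_ge : (b <= logn p `|shrink b k|)%N by rewrite -pfactor_dvdz // dvdz_mulr.
have abs_part := le_trans (Lpn_ge_abs k) le_ks.
have padic_part := pX_div_le logn_ge.
have pnb_le : p%:R ^+ n / p%:R ^+ b <= s / 2.
  by rewrite ler_pdivrMr ?pX_gt0 // mulrAC ler_pdivlMr // mulrC.
rewrite /Lpn (negbTE sk_neq0).
rewrite ler_pdivrMr ?pX_gt0 // in abs_part.
have : `|shrink b k|%:~R / p%:R ^+ n <= s / 2 by rewrite ler_pdivrMr ?pX_gt0 //; nra.
lra.
Qed.

(* p^(logn |k| + 3) satisfies the inequality defining b, because 8 <= p^3 *)
Lemma scale_le_logn k : k != 0 -> Lpn k <= 4 * s -> (b <= logn p `|k| + 3)%N.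
Proof.
move=> k_neq0 le_ks; apply: scale_min.
have := le_trans (Lpn_ge_padic k_neq0) le_ks.
rewrite ler_pdivrMr ?pX_gt0 // exprD => le_pn.
have p3_ge8 : 8 <= (p%:R : R) ^+ 3.
  by rewrite -natrX ler_nat -[8%N]/(2 ^ 3)%N leq_exp2r // prime_gt1.
have := pX_gt0 (logn p `|k|).
have := ler_wpM2l (ltW (mulr_gt0 s_gt0 (pX_gt0 (logn p `|k|)))) p3_ge8.
nra.
Qed.

Lemma dvdz_ball k : Lpn k <= 4 * s -> ((p ^ (b - 3))%N%:Z %| k)%Z.
Proof.
have [->|k_neq0] := eqVneq k 0; first by rewrite dvdz0.
by move=> le_ks; rewrite pfactor_dvdz // leq_subLR addnC scale_le_logn.
Qed.

Lemma shrink_label_inj :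
  {in [pred k | Lpn k <= 4 * s] &,
    injective (fun k => (shrink b k, residue_label b k))}.
Proof.
move=> k k'; rewrite !inE => le_ks le_k's [shrink_eq label_eq].
have near := shrink_eq_near shrink_eq.
have dvd_diff := residue_label_eq_dvdz (dvdz_ball le_ks) (dvdz_ball le_k's) label_eq.
have le_b : (p ^ b <= p ^ 3 * p ^ (b - 3))%N.
  by rewrite -expnD leq_pexp2l ?prime_gt0 // -leq_subLR.
apply/eqP; rewrite -subr_eq0; apply/eqP/(dvdz_small_eq0 dvd_diff).
by apply: leq_trans near _; rewrite -mulnA leq_mul2l.
Qed.

End Compression.

Lemma Lpn_compressible s : 0 < s -> compressible Lpn s (16 * p ^ 3).
Proof.
move=> s_gt0.
have [b scale_large scale_min] : {b | 2 * p%:R ^+ n <= s * p%:R ^+ b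
    & forall b', 2 * p%:R ^+ n <= s * p%:R ^+ b' -> (b <= b')%N}.
  pose x := 2 * p%:R ^+ n / s.
  have ex_scale : exists b, 2 * p%:R ^+ n <= s * p%:R ^+ b.
    exists (Num.truncn x).+1; rewrite -ler_pdivrMl // mulrC.
    apply: ltW; apply: lt_le_trans (truncnS_gt x) _.
    by rewrite -natrX ler_nat ltnW // ltn_expl // prime_gt1.
  by case: (ex_minnP ex_scale) => b b_large b_min; exists b.
exists (shrink b), (residue_label b); split.
- exact: Lpn_shrink s_gt0 scale_large.
- exact: residue_label_lt.
- exact: shrink_label_inj s_gt0 scale_min.
Qed.

End PadicCoordinate.

Lemma LSigma_sum_length (R : realType) (p n : nat) : prime p ->
  LSigma R p n = sum_length (Lpn R p n) (Lpn R p n).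
Proof. by move=> p_prime; apply: funext => g; rewrite /LSigma rmorphD /= !ratr_Lp_gamma. Qed.

Lemma doubling_constant_le (p : nat) : (0 < p)%N ->
  ((16 * p ^ 3) * (16 * p ^ 3) <= (4 * p ^ 8) ^ 4)%N.
Proof.
move=> p_gt0; rewrite mulnACA -expnD expnMn -expnM.
by rewrite leq_mul // leq_pexp2l.
Qed.

Theorem corollary3p17 (R : realType) (p n : nat) (hp : prime p) :
  is_length_function (@LSigma R p n) /\
  is_proper (@LSigma R p n) /\
  bounded_doubling (@LSigma R p n) ((4 * (p%:R : R) ^+ 8) ^+ 4).
Proof.
rewrite LSigma_sum_length //.
have Lpn_len : is_length_function (Lpn R p n) by exact: Lpn_length.
have Lpn_prop : is_proper (Lpn R p n) by exact: Lpn_proper.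
have Lpn_comp s : 0 < s -> compressible (Lpn R p n) s (16 * p ^ 3).
  exact: Lpn_compressible.
split; first exact: sum_length_function.
have sum_prop := sum_length_proper Lpn_len Lpn_len Lpn_prop Lpn_prop.
split=> //; split=> // r s1 s2 r_ge1 ball1 ball2.
have := sum_length_doubling Lpn_len Lpn_len Lpn_comp Lpn_comp
  (lt_le_trans ltr01 r_ge1) ball1 ball2.
rewrite -(ler_nat R) natrM mulrC => /le_trans; apply.
rewrite ler_wpM2r // -natrX -natrM -natrX ler_nat.
exact/doubling_constant_le/prime_gt0.
Qed.
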